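(* Let $r\ge 2$, $n\ge1$ and $\underline m=(m_0,m_1,m_2,m_3)\in\mathbb N^4$ with $\gcd(m_\ell,r)=n$ for a single $\ell\in\{0,1,2,3\}$ and $\gcd(m_i,r)=1$ for $i\ne\ell$. Let $t\in\{0,\dots,n-1\}$. (1) If $i<\ell$, the number of admissible paths from $(v_i,0)$ to $(v_\ell,t)$ all of whose vertices lie in levels $i$ and $\ell$ is $\frac rn$. (2) If $i>\ell$, the number of admissible paths from $(v_\ell,t)$ to $(v_i,0)$ all of whose vertices lie in levels $\ell$ and $i$ is $\frac rn$.
   Context: Let $r\ge 2$ and $N\ge 0$ be integers and $\underline m=(m_0,\dots,m_N)\in\mathbb N^{N+1}$. The skew product graph $L_{2N+1}\times_{\underline m}\mathbb Z_r$ is the directed graph with vertices $(v_i,k)$, $0\le i\le N$, $k\in\mathbb Z_r=\{0,1,\dots,r-1\}$, and edges $(e_{ij},k)$ for $0\le i\le j\le N$, $k\in\mathbb Z_r$, the edge $(e_{ij},k)$ having source $(v_i,k-m_i \bmod r)$ and range $(v_j,k)$. The vertices $(v_i,k)$, $k\in\mathbb Z_r$, form level $i$. A vertex $(v_l,k)$ is called distinguished if $0\le k<\gcd(m_l,r)$. For distinguished vertices $(v_i,s),(v_j,t)$, an admissible path from $(v_i,s)$ to $(v_j,t)$ is a finite path of positive length in the skew product graph with source $(v_i,s)$ and range $(v_j,t)$ none of whose vertices other than its source and range is distinguished. Here $N=3$. *)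

From mathcomp Require Import all_boot.
Set Implicit Arguments. Unset Strict Implicit. Unset Printing Implicit Defensive.

(* Skew product graph L_{2N+1} x_m Z_r with N = 3.
   Levels are 'I_4 ; the Z_r coordinate is a nat k with k < r.
   A vertex (v_i,k) is the pair (i,k); an edge (e_ij,k) is the triple (i,j,k). *)

Definition vertex := ('I_4 * nat)%type.
Definition edge := ('I_4 * 'I_4 * nat)%type.

Section Skew.
Variables (r : nat) (m : 'I_4 -> nat).

Definition is_edge (e : edge) : bool :=
  let: (i, j, k) := e in (i <= j) && (k < r).

(* source of (e_ij,k) is (v_i, k - m_i mod r) *)
Definition esrc (e : edge) : vertex :=
  let: (i, j, k) := e in (i, (k + (r - m i %% r)) %% r).

Definition erng (e : edge) : vertex :=
  let: (i, j, k) := e in (j, k).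

Definition distinguished (v : vertex) : bool := v.2 < gcdn (m v.1) r.

Fixpoint composable (p : seq edge) : bool :=
  match p with
  | e1 :: ((e2 :: _) as q) => (erng e1 == esrc e2) && composable q
  | _ => true
  end.

Definition is_path (p : seq edge) : bool :=
  [&& size p > 0, all is_edge p & composable p].

Definition psrc (p : seq edge) (dflt : vertex) : vertex :=
  if p is e :: _ then esrc e else dflt.
Definition prng (p : seq edge) (dflt : vertex) : vertex := last dflt (map erng p).

Definition pverts (p : seq edge) : seq vertex :=
  if p is e :: _ then esrc e :: map erng p else [::].

Definition pinterior (p : seq edge) : seq vertex := take (size p).-1 (map erng p).

Definition admissible (u v : vertex) (p : seq edge) : bool :=
  [&& is_path p, psrc p u == u, prng p u == v,
      distinguished u, distinguished v &
      ~~ has distinguished (pinterior p)].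

Definition in_levels (a b : 'I_4) (p : seq edge) : bool :=
  all (fun w : vertex => (w.1 == a) || (w.1 == b)) (pverts p).

End Skew.

Definition card_is (P : seq edge -> Prop) (c : nat) : Prop :=
  exists s : seq (seq edge), [/\ uniq s, forall p, p \in s <-> P p & size s = c].

From mathcomp Require Import all_boot zify.
Set Implicit Arguments. Unset Strict Implicit. Unset Printing Implicit Defensive.

(* Inside level L an edge e_LL moves the Z_r coordinate by y |-> y + m_L mod r,
   and edges only go from a level to a higher one.  Hence a path from level A
   to a higher level B staying in levels A and B is made of a loops at A, one
   edge e_AB landing on a "crossing point" (v_B, x), then b loops at B.  On
   level L the walk y |-> y + m_L preserves y mod g_L = gcd(m_L, r), reaches
   every point of that residue class, and the distinguished vertices it meets
   are exactly the (v_L, k) with k < g_L.  Consequently an admissible path from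
   (v_A, s) to (v_B, e) is determined by its crossing point x, and every x with
   x = s mod g_A and x = e mod g_B occurs: the number of such paths is the
   number of these residues x < r (card_two_levels). *)

Lemma card_is_param (T : eqType) (X : seq T) (F : T -> seq edge -> Prop)
    (P : seq edge -> Prop) :
  uniq X ->
  (forall x, x \in X -> exists p, F x p) ->
  (forall x p q, x \in X -> F x p -> F x q -> p = q) ->
  (forall x y p, F x p -> F y p -> x = y) ->
  (forall p, P p <-> exists2 x, x \in X & F x p) ->
  card_is P (size X).
Proof.
move=> uX exF funF injF defP.
suff [s [us memS sizeS]] : exists s, [/\ uniq s,
    forall p, p \in s <-> exists2 x, x \in X & F x p & size s = size X].
  by exists s; split=> // p; rewrite memS defP.
clear defP; elim: X uX exF funF => [|y Y IH] /= => [_ _ _|/andP [yY uY] exF funF].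
  by exists [::]; split=> // p; split=> [|[]].
have [p Fyp] := exF y (mem_head y Y).
have [s [us memS sizeS]] : exists s, [/\ uniq s,
    forall p, p \in s <-> exists2 x, x \in Y & F x p & size s = size Y].
  by apply: IH => // [x xY|x p1 p2 xY]; [apply: exF | apply: funF];
     rewrite inE xY orbT.
exists (p :: s); split; rewrite /= ?sizeS //.
  rewrite us andbT; apply/negP => /memS [x xY Fxp].
  by move: yY; rewrite -(injF _ _ _ Fxp Fyp) xY.
move=> q; rewrite inE; split.
  case/orP => [/eqP -> | /memS [x xY Fxq]]; first by exists y; rewrite ?mem_head.
  by exists x; rewrite // inE xY orbT.
case=> x; rewrite inE => /orP [/eqP -> Fyq | xY Fxq].
  by rewrite (funF y q p) ?mem_head ?eqxx.
by apply/orP; right; apply/memS; exists x.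
Qed.

Lemma first_visit (f : nat -> nat) y x : (exists c, iter c f y = x) ->
  exists b, iter b f y = x /\ forall q, q < b -> iter q f y != x.
Proof.
move=> [c hc]; have hex : exists c, iter c f y == x by exists c; rewrite hc.
case: (ex_minnP hex) => b /eqP hb bmin; exists b; split=> // q q_lt.
by apply/negP => /bmin; rewrite leqNgt q_lt.
Qed.

Lemma count_residue n r t : n %| r -> t < n ->
  count (fun x => x %% n == t) (iota 0 r) = r %/ n.
Proof.
move=> /dvdnP [k ->] tn; have n_gt0 : 0 < n by lia.
rewrite mulnK //; elim: k => [|k IH] //.
rewrite mulSnr iotaD count_cat IH add0n.
have -> : iota (k * n) n = map (addn (k * n)) (iota 0 n) by rewrite -iotaDl addn0.
rewrite count_map.
have -> : count (preim (addn (k * n)) (fun x => x %% n == t)) (iota 0 n)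
          = count_mem t (iota 0 n).
  apply: eq_in_count => y; rewrite mem_iota add0n /= => yn.
  by rewrite /preim /= modnMDl modn_small // eq_sym.
by rewrite count_uniq_mem ?iota_uniq // mem_iota tn addn1.
Qed.

Lemma bezout_modn a r : 0 < r -> exists u, u * a = gcdn a r %[mod r].
Proof.
move=> r_gt0; have [b _ /dvdnP [k hk]] := Bezoutr a r_gt0.
exists (b * r.-1).
have E : gcdn a r * r + b * r.-1 * a = r.-1 * k * r + gcdn a r.
  have r_eq : r = r.-1.+1 by lia.
  by move: hk; move: r.-1 r_eq => p ->; lia.
by move: (congr1 (modn^~ r) E); rewrite /= !modnMDl.
Qed.

Section LevelWalk.
Variables (r : nat) (m : 'I_4 -> nat).
Hypothesis r_gt0 : 0 < r.

(* A loop e_LL at level L whose source has coordinate y has range step L y. *)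
Definition step (L : 'I_4) (y : nat) : nat := (y + m L) %% r.

Local Notation g L := (gcdn (m L) r).

Lemma step_lt L y : step L y < r.
Proof. by rewrite ltn_pmod. Qed.

Lemma iter_step_lt L c y : y < r -> iter c (step L) y < r.
Proof. by case: c => [|c] //= _; apply: step_lt. Qed.

(* Adding m_L and then r - m_L mod r is the identity modulo r. *)
Lemma sub_modn_add a : r - a %% r + a = (a %/ r).+1 * r.
Proof. have := divn_eq a r; have : a %% r < r by rewrite ltn_pmod. lia. Qed.

Lemma src_step L y : y < r -> (step L y + (r - m L %% r)) %% r = y.
Proof.
move=> y_lt; rewrite /step modnDml -addnA [m L + _]addnC sub_modn_add.
by rewrite addnC modnMDl modn_small.
Qed.

Lemma step_src L k : k < r -> step L ((k + (r - m L %% r)) %% r) = k.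
Proof.
move=> k_lt; rewrite /step modnDml -addnA sub_modn_add.
by rewrite addnC modnMDl modn_small.
Qed.

Lemma iter_stepE L c y : y < r -> iter c (step L) y = (y + c * m L) %% r.
Proof.
move=> y_lt; elim: c => [|c IH]; first by rewrite addn0 modn_small.
by rewrite iterS IH /step modnDml mulSn [m L + _]addnC addnA.
Qed.

Lemma iter_step_inj L c x y : x < r -> y < r ->
  iter c (step L) x = iter c (step L) y -> x = y.
Proof.
elim: c x y => [|c IH] x y x_lt y_lt //.
rewrite !iterSr => /(IH _ _ (step_lt _ _) (step_lt _ _)).
by move=> /(congr1 (fun k => (k + (r - m L %% r)) %% r)); rewrite !src_step.
Qed.

Lemma walk_mod L c y : y < r -> iter c (step L) y = y %[mod g L].
Proof.
move=> y_lt; rewrite iter_stepE // modn_dvdm ?dvdn_gcdr //.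
by rewrite -{1}(divnK (dvdn_gcdl (m L) r)) mulnA addnC modnMDl.
Qed.

Lemma walk_distinguished L c y : y < r ->
  distinguished r m (L, iter c (step L) y) -> iter c (step L) y = y %% g L.
Proof. by move=> y_lt /= d_lt; rewrite -(walk_mod L c y_lt) modn_small. Qed.

Lemma walk_reach L x y : x < r -> y < r -> x = y %[mod g L] ->
  exists2 c, 0 < c & iter c (step L) y = x.
Proof.
move=> x_lt y_lt xy; have [u hu] := bezout_modn (m L) r_gt0.
have g_r : g L %| r by apply: dvdn_gcdr.
have g_d : g L %| x + r - y.
  rewrite -eqn_mod_dvd; last by lia.
  by move: g_r; rewrite /dvdn -modnDmr => /eqP ->; rewrite addn0 xy.
set q := (x + r - y) %/ g L.
exists (u * q + r); first by rewrite addn_gt0 r_gt0 orbT.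
rewrite iter_stepE //.
have -> : y + (u * q + r) * m L = m L * r + (y + q * (u * m L)) by lia.
rewrite modnMDl -modnDmr -modnMmr hu modnMmr modnDmr divnK //.
by rewrite subnKC ?modnDr ?modn_small // (leq_trans (ltnW y_lt) (leq_addl x r)).
Qed.

Fixpoint loop_path (L : 'I_4) (y c : nat) : seq edge :=
  if c is c'.+1 then (L, L, step L y) :: loop_path L (step L y) c' else [::].

Fixpoint chain (v : vertex) (p : seq edge) : bool :=
  if p is e :: p' then [&& is_edge r e, esrc r m e == v & chain (erng e) p']
  else true.

Lemma chain_cat v p1 p2 :
  chain v (p1 ++ p2) = chain v p1 && chain (last v (map erng p1)) p2.
Proof. by elim: p1 v => [|e p1 IH] v //=; rewrite IH !andbA. Qed.

Lemma composable_chain e p :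
  composable r m (e :: p) && all (is_edge r) (e :: p)
  = is_edge r e && chain (erng e) p.
Proof.
elim: p e => [|e' p IH] e; first by rewrite /= andbT.
have -> : composable r m [:: e, e' & p]
          = (erng e == esrc r m e') && composable r m (e' :: p) by [].
rewrite [all _ _]/= [chain _ _]/= andbCA -andbA IH (eq_sym (esrc _ _ _)).
by rewrite [X in _ && X]andbCA.
Qed.

Lemma is_path_chain v p :
  is_path r m p && (psrc r m p v == v) = (0 < size p) && chain v p.
Proof.
case: p => [|e p] //; rewrite /is_path [chain _ _]/= [psrc _ _ _ _]/=.
rewrite [all _ _ && _]andbC composable_chain.
by case: (esrc r m e == v); rewrite ?andbT ?andbF.
Qed.

Lemma pverts_chain v p : chain v p -> 0 < size p -> pverts r m p = v :: map erng p.
Proof. by case: p => [|e p] //= /and3P [_ /eqP -> _]. Qed.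

Lemma size_loop_path L y c : size (loop_path L y c) = c.
Proof. by elim: c y => [|c IH] y //=; rewrite IH. Qed.

Lemma chain_loop_path L y c : y < r -> chain (L, y) (loop_path L y c).
Proof.
elim: c y => [|c IH] y y_lt //=.
by rewrite /is_edge leqnn step_lt src_step // eqxx IH ?step_lt.
Qed.

Lemma last_loop_path L y c :
  last (L, y) (map erng (loop_path L y c)) = (L, iter c (step L) y).
Proof. by elim: c y => [|c IH] y //=; rewrite IH -iterSr. Qed.

Lemma map_erng_loop_path L y c :
  map erng (loop_path L y c) = [seq (L, iter q.+1 (step L) y) | q <- iota 0 c].
Proof.
elim: c y => [|c IH] y //=; rewrite IH -[1]/(1 + 0) iotaDl -map_comp.
by congr (_ :: _); apply: eq_map => q /=; rewrite add0n -iterSr.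
Qed.

Lemma take_loop_path L y c :
  take c ((L, y) :: map erng (loop_path L y c))
  = [seq (L, iter q (step L) y) | q <- iota 0 c].
Proof.
elim: c y => [|c IH] y //=; rewrite IH -[1]/(1 + 0) iotaDl -map_comp.
by congr (_ :: _); apply: eq_map => q /=; rewrite add0n -iterSr.
Qed.

Lemma count_loop_path (B L : 'I_4) y c :
  count (fun e : edge => e.1.2 == B) (loop_path L y c) = (L == B) * c.
Proof. by elim: c y => [|c IH] y //=; rewrite ?muln0 // IH mulnS. Qed.

Lemma distinguished_lt L y : distinguished r m (L, y) -> y < r.
Proof. by move=> /= /leq_trans; apply; rewrite dvdn_leq ?dvdn_gcdr. Qed.

Section TwoLevels.
Variables (A B : 'I_4) (s0 e : nat).
Hypotheses (lt_AB : A < B)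
  (dA : distinguished r m (A, s0)) (dB : distinguished r m (B, e)).

Local Notation fA := (step A).
Local Notation fB := (step B).
Local Notation in_AB := (fun v : vertex => (v.1 == A) || (v.1 == B)).

Definition two_level_path (y a b : nat) : seq edge :=
  loop_path A y a ++ (A, B, iter a.+1 fA y) :: loop_path B (iter a.+1 fA y) b.

Lemma A_neq_B : (A == B) = false.
Proof. by apply/negbTE; rewrite neq_ltn lt_AB. Qed.

Lemma loop_path_B y p : y < r -> chain (B, y) p -> all in_AB (map erng p) ->
  p = loop_path B y (size p).
Proof.
elim: p y => [|[[i j] k] p IH] y y_lt //=.
case/and3P => /andP [le_ij k_lt] /eqP [ei ek] chain_p /andP [j_AB all_p].
have ej : j = B.
  by case/orP: j_AB => /eqP // ej; move: le_ij; rewrite ej ei leqNgt lt_AB.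
have ek' : k = fB y by rewrite -ek ei step_src.
subst i j k; congr (_ :: _); exact: IH (step_lt _ _) chain_p all_p.
Qed.

Lemma two_level_decomp y p :
  y < r -> chain (A, y) p -> all in_AB (map erng p) ->
  (last (A, y) (map erng p)).1 == B -> exists a b, p = two_level_path y a b.
Proof.
elim: p y => [|[[i j] k] p IH] y y_lt /=; first by rewrite A_neq_B.
case/and3P => /andP [_ k_lt] /eqP [ei ek] chain_p /andP [j_AB all_p] last_B.
have ek' : k = fA y by rewrite -ek ei step_src.
subst i k; case/orP: j_AB => /eqP ej; subst j.
- have [a [b ->]] := IH _ (step_lt _ _) chain_p all_p last_B.
  by exists a.+1, b; rewrite /two_level_path -!iterSr.
- by exists 0, (size p); rewrite /two_level_path /= -loop_path_B ?step_lt.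
Qed.

Lemma chain_two_level_path y a b : y < r -> chain (A, y) (two_level_path y a b).
Proof.
move=> y_lt; rewrite chain_cat chain_loop_path // last_loop_path /=.
rewrite (ltnW lt_AB) step_lt src_step ?iter_step_lt // eqxx /=.
exact: chain_loop_path (step_lt _ _).
Qed.

Lemma last_two_level_path y a b v :
  last v (map erng (two_level_path y a b)) = (B, iter b fB (iter a.+1 fA y)).
Proof. by rewrite map_cat last_cat /= last_loop_path. Qed.

Lemma size_two_level_path y a b : size (two_level_path y a b) = a + b.+1.
Proof. by rewrite size_cat /= !size_loop_path. Qed.

Lemma interior_two_level_path y a b : pinterior (two_level_path y a b) =
  [seq (A, iter q.+1 fA y) | q <- iota 0 a]
  ++ [seq (B, iter q fB (iter a.+1 fA y)) | q <- iota 0 b].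
Proof.
rewrite /pinterior size_two_level_path map_cat map_erng_loop_path addnS /=.
rewrite take_cat size_map size_iota ltnNge leq_addr /= addKn.
by rewrite take_loop_path.
Qed.

Lemma levels_two_level_path y a b : all in_AB (map erng (two_level_path y a b)).
Proof.
rewrite map_cat all_cat /= eqxx orbT !map_erng_loop_path !all_map /=.
by apply/andP; split; apply/allP => q _ /=; rewrite eqxx ?orbT.
Qed.

(* The numbers of loops are determined by the path (count the edges into B). *)
Lemma two_level_path_inj y a b a' b' :
  two_level_path y a b = two_level_path y a' b' -> a = a' /\ b = b'.
Proof.
have count_B a1 b1 :
    count (fun e : edge => e.1.2 == B) (two_level_path y a1 b1) = b1.+1.
  by rewrite count_cat /= !count_loop_path A_neq_B eqxx mul1n.
move=> eq_p; have eq_b : b = b'.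
  by have := count_B a b; rewrite eq_p count_B => -[].
split=> //; have := size_two_level_path y a b.
by rewrite eq_p size_two_level_path eq_b => /eqP; rewrite eqn_add2r => /eqP.
Qed.

Lemma s0_lt : s0 < r. Proof. exact: distinguished_lt dA. Qed.
Lemma e_lt : e < r. Proof. exact: distinguished_lt dB. Qed.

Definition cross (a : nat) : nat := iter a.+1 fA s0.

Definition avoids_A a : bool :=
  ~~ has (fun q => distinguished r m (A, cross q)) (iota 0 a).

Definition avoids_B x b : bool :=
  ~~ has (fun q => distinguished r m (B, iter q fB x)) (iota 0 b).

Lemma admissible_two_level p :
  admissible r m (A, s0) (B, e) p && in_levels r m A B p <->
  exists a b, [/\ p = two_level_path s0 a b, avoids_A a, avoids_B (cross a) b
                & iter b fB (cross a) = e].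
Proof.
split.
- case/andP; rewrite /admissible andbA is_path_chain.
  case/and5P => /andP [size_p chain_p] last_p _ _ inner_p.
  rewrite /in_levels (pverts_chain chain_p size_p) /= => /andP [_ levels_p].
  have last_B : (last (A, s0) (map erng p)).1 == B.
    by move: last_p; rewrite /prng => /eqP ->.
  have [a [b eq_p]] := two_level_decomp s0_lt chain_p levels_p last_B.
  subst p; exists a, b; move: last_p inner_p.
  rewrite /prng last_two_level_path interior_two_level_path.
  rewrite has_cat negb_or !has_map.
  by move=> /eqP [->] /andP [? ?].
- case=> a [b [-> avA avB reach_e]].
  rewrite /admissible andbA is_path_chain size_two_level_path addnS ltn0Sn.
  rewrite chain_two_level_path ?s0_lt //= /prng last_two_level_path -/(cross a).
  rewrite reach_e eqxx dA dB /in_levels.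
  rewrite (pverts_chain (chain_two_level_path a b s0_lt)).
    rewrite interior_two_level_path has_cat negb_or !has_map.
    apply/andP; split; first by apply/and5P.
    by rewrite /= eqxx levels_two_level_path.
  by rewrite size_two_level_path addnS.
Qed.

Lemma walk_A_distinguished c :
  distinguished r m (A, iter c fA s0) -> iter c fA s0 = s0.
Proof. by move/walk_distinguished => ->; rewrite ?modn_small ?s0_lt. Qed.

Lemma cross_first x : x < r -> x = s0 %[mod g A] ->
  exists a, avoids_A a /\ cross a = x.
Proof.
move=> x_lt x_s0; have [c c_gt0 reach_x] := walk_reach x_lt s0_lt x_s0.
have [|a [cross_a a_min]] := @first_visit fA (fA s0) x.
  by exists c.-1; rewrite -iterSr prednK.
exists a; split; last by rewrite /cross iterSr.
apply/hasPn => q; rewrite mem_iota add0n => /andP [_ lt_qa].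
apply/negP => /walk_A_distinguished cross_q.
have lt_aq : a - q.+1 < a by lia.
have := a_min _ lt_aq; rewrite -iterSr -subSn // -cross_q /cross -iterD.
by rewrite subnK ?iterSr ?cross_a ?eqxx // ltnW.
Qed.

Lemma arrival_first x : x < r -> x = e %[mod g B] ->
  exists b, avoids_B x b /\ iter b fB x = e.
Proof.
move=> x_lt x_e; have [c _ reach_e] := walk_reach e_lt x_lt (esym x_e).
have [b [arrive_b b_min]] := @first_visit fB x e (ex_intro _ c reach_e).
exists b; split=> //; apply/hasPn => q; rewrite mem_iota add0n => /andP [_ lt_qb].
apply/negP => /walk_distinguished -/(_ x_lt) iter_q.
by move: (b_min q lt_qb); rewrite iter_q x_e (modn_small dB) eqxx.
Qed.

(* Avoiding paths cross at distinct points: otherwise the level-A walk would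
   return to the distinguished vertex s0 in the interior. *)
Lemma cross_inj a a' : avoids_A a -> avoids_A a' -> cross a = cross a' -> a = a'.
Proof.
wlog lt_aa' : a a' / a < a'.
  move=> hyp avA avA' eq_cross; case: (ltngtP a a') => // [lt|lt].
    exact: hyp.
  by apply/esym/hyp.
move=> _ /hasPn avA' eq_cross.
have sub_a : a'.+1 = a.+1 + (a' - a) by rewrite addSn subnKC // ltnW.
move: eq_cross; rewrite /cross sub_a iterD.
move=> /(iter_step_inj s0_lt (iter_step_lt _ _ s0_lt)) eq_s0.
have in_a' : (a' - a).-1 \in iota 0 a' by rewrite mem_iota; lia.
by move: (avA' _ in_a'); rewrite /cross prednK ?subn_gt0 // -eq_s0 dA.
Qed.

(* On level B an avoiding path stops at the first visit of e. *)
Lemma arrival_unique x b b' : avoids_B x b -> avoids_B x b' ->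
  iter b fB x = e -> iter b' fB x = e -> b = b'.
Proof.
suff lt_gen c c' : c < c' -> avoids_B x c' -> iter c fB x = e -> False.
  move=> avB avB' arr arr'; case: (ltngtP b b') => // lt.
  - by case: (lt_gen _ _ lt avB' arr).
  - by case: (lt_gen _ _ lt avB arr').
move=> lt_cc' /hasPn avB' arrive_c.
have in_c' : c \in iota 0 c' by rewrite mem_iota.
by move: (avB' _ in_c'); rewrite /= arrive_c dB.
Qed.

Definition crossing_data (x : nat) (p : seq edge) : Prop := exists a b,
  [/\ p = two_level_path s0 a b, avoids_A a, avoids_B x b, cross a = x
     & iter b fB x = e].

Theorem card_two_levels :
  card_is (fun p => admissible r m (A, s0) (B, e) p && in_levels r m A B p)
    (count (fun x => (x %% g A == s0) && (x %% g B == e)) (iota 0 r)).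
Proof.
rewrite -size_filter; apply: (@card_is_param _ _ crossing_data).
- by rewrite filter_uniq ?iota_uniq.
- move=> x; rewrite mem_filter mem_iota add0n.
  case/and3P => /andP [/eqP x_A /eqP x_B] _ x_lt.
  have [a [avA cross_a]] := cross_first x_lt (etrans x_A (esym (modn_small dA))).
  have [b [avB arrive_b]] := arrival_first x_lt (etrans x_B (esym (modn_small dB))).
  by exists (two_level_path s0 a b), a, b.
- move=> x p q _ [a [b [-> avA avB cross_a arr]]].
  move=> [a' [b' [-> avA' avB' cross_a' arr']]].
  have eq_a := cross_inj avA avA' (etrans cross_a (esym cross_a')).
  by rewrite eq_a (arrival_unique avB avB' arr arr').
- move=> x y p [a [b [-> _ _ <- _]]] [a' [b' [eq_p _ _ <- _]]].
  by case: (two_level_path_inj eq_p) => ->.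
- move=> p; rewrite admissible_two_level; split.
  + case=> a [b [-> avA avB arrive]]; exists (cross a); last by exists a, b.
    have cross_lt : cross a < r by apply: iter_step_lt s0_lt.
    rewrite mem_filter mem_iota cross_lt /= walk_mod ?s0_lt //.
    rewrite (modn_small dA) eqxx /=.
    by rewrite -(walk_mod B b cross_lt) arrive (modn_small dB) eqxx.
  + case=> x _ [a [b [-> avA avB cross_a arrive]]]; subst x; by exists a, b.
Qed.
End TwoLevels.
End LevelWalk.

(* Lemma 3.2: one of the two levels has gcd(m_L, r) = 1, so the crossing points
   are the x < r with x = t mod n, and there are r/n of them. *)
Theorem lemma3p2 (r n : nat) (m : 'I_4 -> nat) (ell : 'I_4) (t : nat) :
  2 <= r -> 1 <= n ->
  gcdn (m ell) r = n ->
  (forall i : 'I_4, i != ell -> gcdn (m i) r = 1) ->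
  t < n ->
  (forall i : 'I_4, i < ell ->
     card_is (fun p => admissible r m (i, 0) (ell, t) p && in_levels r m i ell p)
             (r %/ n)) /\
  (forall i : 'I_4, ell < i ->
     card_is (fun p => admissible r m (ell, t) (i, 0) p && in_levels r m ell i p)
             (r %/ n)).
Proof.
move=> r_ge2 _ g_ell g_other t_lt; have r_gt0 : 0 < r by lia.
have count_t : count (fun x => x %% n == t) (iota 0 r) = r %/ n.
  by rewrite count_residue // -g_ell dvdn_gcdr.
have d_ell : distinguished r m (ell, t) by rewrite /distinguished /= g_ell.
have d_other i : i != ell -> distinguished r m (i, 0).
  by move=> /g_other; rewrite /distinguished /= => ->.
split=> i lt_i.
- have ne_i : i != ell by apply: contraTneq lt_i => ->; rewrite ltnn.
  have := card_two_levels r_gt0 lt_i (d_other i ne_i) d_ell.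
  by rewrite g_ell g_other // -count_t; under eq_count do rewrite modn1.
- have ne_i : i != ell by apply: contraTneq lt_i => ->; rewrite ltnn.
  have := card_two_levels r_gt0 lt_i d_ell (d_other i ne_i).
  by rewrite g_ell g_other // -count_t; under eq_count do rewrite modn1 andbT.
Qed.
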